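(* Let $T:X\rightrightarrows X^*$ be a pseudomonotone operator with $\mathrm{dom}(T)$ convex. Then $(\widehat{T})^\rho_D=T^\rho_D$.
   Context: $X$ is a real Banach space with dual $X^*$ and pairing $\langle x,x^*\rangle=x^*(x)$. A multivalued operator $T:X\rightrightarrows X^*$ is identified with its graph $T\subset X\times X^*$; $T(x)=\{x^*:(x,x^* )\in T\}$, $\mathrm{dom}(T)=\{x:T(x)\ne\emptyset\}$, $Z_T=\{x:0\in T(x)\}$. For $A\subset X^*$, $\operatorname{cone}_\circ(A)=\{tv:t>0,v\in A\}$. For $C\subset X$, $N_C(x)=\{x^*: \langle y-x,x^*\rangle\le0\ \forall y\in C\}$. For $(x,x^* ),(y,y^* )\in X\times X^*$, write $(x,x^* )\sim_p(y,y^* )$ if either $\min\{\langle x-y,y^*\rangle,\langle y-x,x^*\rangle\}<0$ or $\langle x-y,y^*\rangle=\langle y-x,x^*\rangle=0$. The pseudomonotone polar is $T^\rho=\{(x,x^* ): (x,x^* )\sim_p(y,y^* )\ \forall (y,y^* )\in T\}$, and $T^\rho_D$ denotes its restriction to $\mathrm{dom}(T)$; likewise $(\widehat T)^\rho_D$ is the restriction of $(\widehat T)^\rho$ to $\mathrm{dom}(\widehat T)=\mathrm{dom}(T)$. $T$ is pseudomonotone if for all $(x,x^* ),(y,y^* )\in T$, $\langle y-x,x^*\rangle\ge0$ implies $\langle y-x,y^*\rangle\ge0$. For $x\in Z_T$, $L(T,x)=\{y\in X:\exists y^*\in T(y),\ \langle x-y,y^*\rangle\ge0\}$, and $\widehat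 T(x)=N_{L(T,x)}(x)$ if $x\in Z_T$, $\widehat T(x)=\operatorname{cone}_\circ(T(x))$ if $x\in\mathrm{dom}(T)\setminus Z_T$, $\widehat T(x)=\emptyset$ if $x\notin\mathrm{dom}(T)$. *)

From Stdlib Require Import Reals Lra.
Open Scope R_scope.

Record BanachSpace := {
  carrier :> Type;
  vadd : carrier -> carrier -> carrier;
  vopp : carrier -> carrier;
  vzero : carrier;
  vscal : R -> carrier -> carrier;
  norm : carrier -> R;
  vadd_assoc : forall x y z, vadd x (vadd y z) = vadd (vadd x y) z;
  vadd_comm : forall x y, vadd x y = vadd y x;
  vadd_0 : forall x, vadd x vzero = x;
  vadd_opp : forall x, vadd x (vopp x) = vzero;
  vscal_1 : forall x, vscal 1 x = x;
  vscal_assoc : forall a b x, vscal a (vscal b x) = vscal (a * b) x;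
  vscal_distr_v : forall a x y, vscal a (vadd x y) = vadd (vscal a x) (vscal a y);
  vscal_distr_s : forall a b x, vscal (a + b) x = vadd (vscal a x) (vscal b x);
  norm_eq0 : forall x, norm x = 0 -> x = vzero;
  norm_triangle : forall x y, norm (vadd x y) <= norm x + norm y;
  norm_scal : forall a x, norm (vscal a x) = Rabs a * norm x;
  complete : forall u : nat -> carrier,
    (forall eps, eps > 0 -> exists N, forall m n, (m >= N)%nat -> (n >= N)%nat ->
        norm (vadd (u m) (vopp (u n))) < eps) ->
    exists l, forall eps, eps > 0 -> exists N, forall n, (n >= N)%nat ->
        norm (vadd (u n) (vopp l)) < eps
}.

Arguments vadd {_}. Arguments vopp {_}. Arguments vzero {_}.
Arguments vscal {_}. Arguments norm {_}.

Definition vsub {X : BanachSpace} (x y : X) : X := vadd x (vopp y).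

Record dual (X : BanachSpace) := {
  dfun :> X -> R;
  dfun_add : forall x y, dfun (vadd x y) = dfun x + dfun y;
  dfun_scal : forall a x, dfun (vscal a x) = a * dfun x;
  dfun_bounded : exists M, forall x, Rabs (dfun x) <= M * norm x
}.
Arguments dfun {X}.

Definition pairing {X : BanachSpace} (x : X) (xs : dual X) : R := dfun xs x.

Definition dzero (X : BanachSpace) : dual X.
Proof.
  refine {| dfun := fun _ => 0 |}.
  - intros; ring.
  - intros; ring.
  - exists 0; intros x; rewrite Rabs_R0; lra.
Defined.

Definition dscal {X : BanachSpace} (t : R) (v : dual X) : dual X.
Proof.
  refine {| dfun := fun x => t * v x |}.
  - intros; rewrite dfun_add; ring.
  - intros; rewrite dfun_scal; ring.
  - destruct (dfun_bounded X v) as [M HM]. exists (Rabs t * M). intros x.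
    rewrite Rabs_mult, Rmult_assoc. apply Rmult_le_compat_l; [apply Rabs_pos | apply HM].
Defined.

(* multivalued operators, identified with their graphs *)
Definition Operator (X : BanachSpace) := X -> dual X -> Prop.

Definition dom {X : BanachSpace} (T : Operator X) (x : X) : Prop :=
  exists xs, T x xs.

Definition zeros {X : BanachSpace} (T : Operator X) (x : X) : Prop :=
  T x (dzero X).

Definition convex {X : BanachSpace} (C : X -> Prop) : Prop :=
  forall x y t, C x -> C y -> 0 <= t <= 1 ->
    C (vadd (vscal t x) (vscal (1 - t) y)).

Definition cone_o {X : BanachSpace} (A : dual X -> Prop) (w : dual X) : Prop :=
  exists t v, t > 0 /\ A v /\ w = dscal t v.

Definition normal_cone {X : BanachSpace} (C : X -> Prop) (x : X) (xs : dual X) : Prop :=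
  forall y, C y -> pairing (vsub y x) xs <= 0.

Definition sim_p {X : BanachSpace} (x : X) (xs : dual X) (y : X) (ys : dual X) : Prop :=
  Rmin (pairing (vsub x y) ys) (pairing (vsub y x) xs) < 0 \/
  (pairing (vsub x y) ys = 0 /\ pairing (vsub y x) xs = 0).

Definition polar {X : BanachSpace} (T : Operator X) : Operator X :=
  fun x xs => forall y ys, T y ys -> sim_p x xs y ys.

Definition polarD {X : BanachSpace} (T : Operator X) : Operator X :=
  fun x xs => dom T x /\ polar T x xs.

Definition pseudomonotone {X : BanachSpace} (T : Operator X) : Prop :=
  forall x xs y ys, T x xs -> T y ys ->
    pairing (vsub y x) xs >= 0 -> pairing (vsub y x) ys >= 0.

Definition Lset {X : BanachSpace} (T : Operator X) (x : X) (y : X) : Prop :=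
  exists ys, T y ys /\ pairing (vsub x y) ys >= 0.

Definition That {X : BanachSpace} (T : Operator X) : Operator X :=
  fun x xs =>
    (zeros T x /\ normal_cone (Lset T x) x xs) \/
    (dom T x /\ ~ zeros T x /\ cone_o (T x) xs).

From Stdlib Require Import Reals Lra Classical.
Open Scope R_scope.

(* Every pair of the graph of T has a positive multiple in the graph of T^,
   so the polar of T^ is contained in that of T. Conversely, the polar of T
   is invariant under positive rescaling of T, which handles the points of
   T^ outside Z_T; at a zero y of T, membership of x in the polar of T
   forces <y - x, x^*> <= 0, and in the borderline case <y - x, x^*> = 0
   pseudomonotonicity places the midpoint of x and y in L(T, y), which
   turns the normal-cone condition on y^* into the required sign. *)

Section DualPairing.

Variable X : BanachSpace.

Lemma dfun_vzero (f : dual X) : f vzero = 0.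
Proof. pose proof (dfun_add X f vzero vzero) as H; rewrite vadd_0 in H; lra. Qed.

Lemma dfun_vopp (f : dual X) (y : X) : f (vopp y) = - f y.
Proof.
  pose proof (dfun_add X f y (vopp y)) as H.
  rewrite vadd_opp, dfun_vzero in H; lra.
Qed.

Lemma pairing_vsub (a b : X) (f : dual X) : pairing (vsub a b) f = f a - f b.
Proof. unfold pairing, vsub; rewrite dfun_add, dfun_vopp; ring. Qed.

Lemma dfun_convex_comb (f : dual X) (t : R) (x y : X) :
  f (vadd (vscal t x) (vscal (1 - t) y)) = t * f x + (1 - t) * f y.
Proof. rewrite dfun_add, !dfun_scal; reflexivity. Qed.

Lemma sim_pE (x y : X) (xs ys : dual X) :
  sim_p x xs y ys <->
  ys x - ys y < 0 \/ xs y - xs x < 0 \/ (ys x - ys y = 0 /\ xs y - xs x = 0).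
Proof.
  unfold sim_p; rewrite !pairing_vsub; unfold Rmin.
  destruct (Rle_dec (ys x - ys y) (xs y - xs x)); split; intuition lra.
Qed.

Lemma sim_p_dscal (x y : X) (xs ys : dual X) (t : R) :
  t > 0 -> sim_p x xs y (dscal t ys) <-> sim_p x xs y ys.
Proof.
  intros Ht; rewrite !sim_pE; cbn.
  rewrite <- !Rmult_minus_distr_l; split; intros H.
  - destruct H as [H | [H | [H1 H2]]].
    + left; nra.
    + right; left; exact H.
    + right; right; split; [nra | exact H2].
  - destruct H as [H | [H | [H1 H2]]].
    + left; nra.
    + right; left; exact H.
    + right; right; split; [rewrite H1; ring | exact H2].
Qed.

Lemma normal_cone_dscal (C : X -> Prop) (x : X) (xs : dual X) (t : R) :
  0 <= t -> normal_cone C x xs -> normal_cone C x (dscal t xs).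
Proof.
  intros Ht Hn y Hy; specialize (Hn y Hy).
  rewrite pairing_vsub in *; cbn; nra.
Qed.

End DualPairing.

Section HatOperator.

Variables (X : BanachSpace) (T : Operator X).

Lemma polar_sub_of_scaled_graph (S : Operator X) (x : X) (xs : dual X) :
  (forall y ys, T y ys -> exists t, t > 0 /\ S y (dscal t ys)) ->
  polar S x xs -> polar T x xs.
Proof.
  intros HTS Hp y ys Hy.
  destruct (HTS y ys Hy) as [t [Ht HS]].
  apply (sim_p_dscal X x y xs ys t Ht), Hp, HS.
Qed.

Lemma polar_cone_o (x y : X) (xs ys : dual X) :
  polar T x xs -> cone_o (T y) ys -> sim_p x xs y ys.
Proof.
  intros Hp [t [v [Ht [Hv ->]]]].
  apply sim_p_dscal; [exact Ht | exact (Hp y v Hv)].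
Qed.

Hypothesis T_pseudomonotone : pseudomonotone T.

Lemma normal_cone_Lset_of_graph (y : X) (ys : dual X) :
  T y ys -> normal_cone (Lset T y) y ys.
Proof.
  intros Hy z [zs [Hz Hzy]].
  pose proof (T_pseudomonotone z zs y ys Hz Hy Hzy) as H.
  rewrite pairing_vsub in *; lra.
Qed.

(* [dscal 1 ys] rather than [ys]: [cone_o] only contains terms of the form
   [dscal t v], and [dscal 1 v] is not convertible to [v]. *)
Lemma That_dscal1 (y : X) (ys : dual X) : T y ys -> That T y (dscal 1 ys).
Proof.
  intros Hy; destruct (classic (zeros T y)) as [Hz | Hnz].
  - left; split; [exact Hz |].
    apply normal_cone_dscal; [lra | exact (normal_cone_Lset_of_graph y ys Hy)].
  - right; split; [exists ys; exact Hy |]; split; [exact Hnz |].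
    exists 1, ys; split; [lra | split; [exact Hy | reflexivity]].
Qed.

Lemma dom_That (x : X) : dom (That T) x <-> dom T x.
Proof.
  split.
  - intros [xs [[Hz _] | [Hd _]]]; [exists (dzero X); exact Hz | exact Hd].
  - intros [xs Hx]; exists (dscal 1 xs); exact (That_dscal1 x xs Hx).
Qed.

Lemma polar_zeros_nonpos (x y : X) (xs : dual X) :
  polar T x xs -> zeros T y -> xs y - xs x <= 0.
Proof.
  intros Hp Hz; pose proof (Hp y (dzero X) Hz) as H.
  apply sim_pE in H; cbn in H; lra.
Qed.

Hypothesis dom_T_convex : convex (dom T).

Lemma midpoint_in_Lset (x y : X) (xs : dual X) :
  dom T x -> polar T x xs -> zeros T y -> xs y - xs x = 0 ->
  Lset T y (vadd (vscal (1/2) x) (vscal (1 - 1/2) y)).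
Proof.
  intros Hx Hp Hz Hxy.
  set (z := vadd (vscal (1/2) x) (vscal (1 - 1/2) y)).
  assert (Ez : forall f : dual X, f z = 1/2 * f x + 1/2 * f y)
    by (intros f; unfold z; rewrite dfun_convex_comb; lra).
  destruct (dom_T_convex x y (1/2) Hx (ex_intro _ (dzero X) Hz) ltac:(lra)) as [zs Hzs].
  fold z in Hzs.
  assert (Hzy : zs z - zs y >= 0).
  { rewrite <- pairing_vsub.
    apply (T_pseudomonotone y (dzero X) z zs Hz Hzs).
    rewrite pairing_vsub; cbn; lra. }
  pose proof (Hp z zs Hzs) as Hsim; apply sim_pE in Hsim.
  rewrite (Ez zs), (Ez xs) in Hsim; rewrite Ez in Hzy.
  exists zs; split; [exact Hzs |].
  rewrite pairing_vsub, Ez; destruct Hsim as [? | [? | [? ?]]]; lra.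
Qed.

Lemma polar_zeros_normal_cone (x y : X) (xs ys : dual X) :
  dom T x -> polar T x xs -> zeros T y -> normal_cone (Lset T y) y ys ->
  sim_p x xs y ys.
Proof.
  intros Hx Hp Hz Hn; apply sim_pE.
  pose proof (polar_zeros_nonpos x y xs Hp Hz) as Hxy.
  destruct (Rlt_dec (xs y - xs x) 0) as [Hlt | Hge]; [right; left; exact Hlt |].
  assert (Hxy0 : xs y - xs x = 0) by lra.
  pose proof (Hn _ (midpoint_in_Lset x y xs Hx Hp Hz Hxy0)) as Hmid.
  rewrite pairing_vsub, dfun_convex_comb in Hmid.
  destruct (Rlt_dec (ys x - ys y) 0); [left | right; right]; lra.
Qed.

End HatOperator.

Theorem mainTheorem14 (X : BanachSpace) (T : Operator X) :
  pseudomonotone T -> convex (dom T) ->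
  forall (x : X) (xs : dual X), polarD (That T) x xs <-> polarD T x xs.
Proof.
  intros Hpm Hcv x xs; unfold polarD; rewrite dom_That by exact Hpm.
  split; intros [Hx Hp]; split; try exact Hx.
  - apply (polar_sub_of_scaled_graph X T (That T)); [| exact Hp].
    intros y ys Hy; exists 1; split; [lra | exact (That_dscal1 X T Hpm y ys Hy)].
  - intros y ys [[Hz Hn] | [_ [_ Hc]]].
    + exact (polar_zeros_normal_cone X T Hpm Hcv x y xs ys Hx Hp Hz Hn).
    + exact (polar_cone_o X T x y xs ys Hp Hc).
Qed.
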